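(* Let $\omega\in S_n$ and $1\le i<j\le n$ with $c_i(\omega),c_j(\omega)>0$, and let $a\in[c_i(\omega)]$, $b\in[c_j(\omega)]$ with $m_{i,a}(\omega)>m_{j,b}(\omega)$. (1) If $a,b\ge 2$, then $m_{i,a-1}(\omega)>m_{j,b-1}(\omega)$. (2) If $a<c_i(\omega)$ and $b<c_j(\omega)$, then $m_{i,a+1}(\omega)>m_{j,b+1}(\omega)$.
   Context: Permutations $\omega\in S_n$ are written in one-line notation. Let ${\rm Inv}(\omega)=\{(i,j): 1\le i<j\le n,\ \omega(i)>\omega(j)\}$, $c_i(\omega)=\#\{j: i<j\le n,\ \omega(i)>\omega(j)\}$, and for $i<j$, $c_{i,j}(\omega)=\#\{k: i<k<j,\ \omega(i)>\omega(k)\}$; $[m]=\{1,\dots,m\}$. For $i$ with $c_i(\omega)>0$ and $x\in[c_i(\omega)]$, $m_{i,x}(\omega)\in\mathbb{N}^n$ has $j$-th coordinate $0$ if $j<i$; $x$ if $j=i$; $0$ if $j>i$ and $(i,j)\in{\rm Inv}(\omega)$; $\max\{0,x-c_{i,j}(\omega)\}$ if $j>i$ and $(i,j)\notin{\rm Inv}(\omega)$. Comparisons $<,>$ are strict comparisons in the product order on $\mathbb{N}^n$ ($u\le v$ iff $u_k\le v_k$ for all $k$). *)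

From mathcomp Require Import all_boot all_order all_algebra all_fingroup.
Set Implicit Arguments. Unset Strict Implicit. Unset Printing Implicit Defensive.

(* Positions 1..n of the paper are represented by 'I_n (0..n-1);
   a permutation omega in S_n is a w : 'S_n, with omega(i) read as w i. *)

Definition cnt (n : nat) (w : 'S_n) (i : 'I_n) : nat :=
  #|[set j : 'I_n | (i < j) && (w j < w i)]|.

Definition cnt2 (n : nat) (w : 'S_n) (i j : 'I_n) : nat :=
  #|[set k : 'I_n | [&& i < k, k < j & w k < w i]]|.

(* m_{i,x}(w) in N^n; (i,j) in Inv(w) iff i < j and w i > w j.
   max{0, x - c_{i,j}} is the truncated subtraction x - c_{i,j} on nat. *)
Definition mvec (n : nat) (w : 'S_n) (i : 'I_n) (x : nat) : {ffun 'I_n -> nat} :=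
  [ffun j : 'I_n =>
     if j < i then 0
     else if j == i then x
     else if w j < w i then 0
     else x - cnt2 w i j].

Definition prod_le (n : nat) (u v : {ffun 'I_n -> nat}) : bool :=
  [forall k, u k <= v k].

Definition prod_lt (n : nat) (u v : {ffun 'I_n -> nat}) : bool :=
  prod_le u v && (u != v).

From mathcomp Require Import all_boot all_order all_algebra all_fingroup zify.
Set Implicit Arguments. Unset Strict Implicit. Unset Printing Implicit Defensive.

(* For i < j and b > 0, the comparison m_{j,b} <= m_{i,a} in the product
   order is equivalent to three conditions (mvec_le_elim, mvec_le_intro):
   w(i) < w(j), b <= a - c_{i,j}, and b - c_{j,k} <= a - c_{i,k} for every
   k > j with w(j) < w(k); all other coordinates of m_{j,b} vanish.
   Strictness is automatic, since the i-th coordinates are 0 and a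
   (mvec_neq).  Hence the theorem reduces to arithmetic on these
   conditions: lowering a and b by one preserves them by monotonicity of
   truncated subtraction, and raising both by one preserves them thanks to
   the subadditivity c_{i,k} <= c_{i,j} + c_{j,k} for w(i) < w(j)
   (cnt2_subadditive). *)

Section Mvec.

Variables (n : nat) (w : 'S_n).

Lemma mvec_before (i k : 'I_n) (x : nat) : k < i -> mvec w i x k = 0.
Proof. by move=> lt_ki; rewrite ffunE lt_ki. Qed.

Lemma mvec_diag (i : 'I_n) (x : nat) : mvec w i x i = x.
Proof. by rewrite ffunE ltnn eqxx. Qed.

Lemma mvec_after (i k : 'I_n) (x : nat) : i < k ->
  mvec w i x k = if w k < w i then 0 else x - cnt2 w i k.
Proof.
move=> lt_ik; have ne_ki : (k == i) = false by apply/negbTE; rewrite neq_ltn lt_ik orbT.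
by rewrite ffunE ltnNge (ltnW lt_ik) ne_ki.
Qed.

(* For w(i) < w(j), each k in (j, l) counted by c_{i,l} is counted by
   c_{i,j} (if k < j) or by c_{j,l} (if k > j); k = j is never counted. *)
Lemma cnt2_subadditive (i j l : 'I_n) : i < j -> j < l -> w i < w j ->
  cnt2 w i l <= cnt2 w i j + cnt2 w j l.
Proof.
move=> lt_ij lt_jl lt_w; rewrite /cnt2.
apply: leq_trans (leq_card_setU _ _); apply: subset_leq_card.
apply/subsetP => k; rewrite !inE => /and3P [lt_ik lt_kl lt_wki].
case: (ltngtP k j) => [lt_kj | lt_jk | /val_inj eq_kj].
- by rewrite lt_ik lt_wki.
- by rewrite lt_kl (ltn_trans lt_wki lt_w) orbT.
- by move: lt_wki; rewrite eq_kj ltnNge (ltnW lt_w).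
Qed.

Lemma mvec_neq (i j : 'I_n) (x y : nat) : i < j -> 0 < x ->
  mvec w j y != mvec w i x.
Proof.
move=> lt_ij x_gt0; apply/negP => /eqP /ffunP /(_ i).
by rewrite mvec_before // mvec_diag => x0; rewrite -x0 in x_gt0.
Qed.

Definition mvec_le_cond (i j : 'I_n) (x y : nat) : Prop :=
  [/\ w i < w j, y <= x - cnt2 w i j &
      forall k : 'I_n, j < k -> w j < w k -> y - cnt2 w j k <= x - cnt2 w i k].

Lemma mvec_le_elim (i j : 'I_n) (x y : nat) : i < j -> 0 < y ->
  prod_le (mvec w j y) (mvec w i x) -> mvec_le_cond i j x y.
Proof.
move=> lt_ij y_gt0 /forallP le_m.
have := le_m j; rewrite mvec_diag mvec_after //.
case: ifP => [_ | /negbT]; first by rewrite leqn0 => /eqP y0; rewrite y0 in y_gt0.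
rewrite -leqNgt leq_eqVlt => /orP [/eqP /val_inj /perm_inj eq_ji | lt_w].
  by move: lt_ij; rewrite eq_ji ltnn.
move=> le_yx; split=> // k lt_jk lt_wjk.
have := le_m k; rewrite !mvec_after ?(ltn_trans lt_ij) //.
by rewrite ltnNge (ltnW lt_wjk) ltnNge (ltnW (ltn_trans lt_w lt_wjk)).
Qed.

Lemma mvec_le_intro (i j : 'I_n) (x y : nat) : i < j ->
  mvec_le_cond i j x y -> prod_le (mvec w j y) (mvec w i x).
Proof.
move=> lt_ij [lt_w le_yx le_after]; apply/forallP => k.
case: (ltngtP k j) => [lt_kj | lt_jk | /val_inj ->].
- by rewrite mvec_before.
- have lt_ik := ltn_trans lt_ij lt_jk.
  rewrite !mvec_after //; case: ifPn => // /negbTE; rewrite ltnNge => /negbFE.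
  rewrite leq_eqVlt => /orP [/eqP /val_inj /perm_inj eq_jk | lt_wjk].
    by move: lt_jk; rewrite eq_jk ltnn.
  by rewrite ltnNge (ltnW (ltn_trans lt_w lt_wjk)) /= le_after.
- by rewrite mvec_diag mvec_after // ltnNge (ltnW lt_w).
Qed.

Lemma mvec_lt_intro (i j : 'I_n) (x y : nat) : i < j -> 0 < x ->
  mvec_le_cond i j x y -> prod_lt (mvec w j y) (mvec w i x).
Proof.
by move=> lt_ij x_gt0 cond; rewrite /prod_lt mvec_le_intro ?mvec_neq.
Qed.

End Mvec.

Theorem mainTheorem3 (n : nat) (w : 'S_n) (i j : 'I_n) (a b : nat) :
  i < j ->
  0 < cnt w i -> 0 < cnt w j ->
  1 <= a <= cnt w i -> 1 <= b <= cnt w j ->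
  prod_lt (mvec w j b) (mvec w i a) ->
  (2 <= a -> 2 <= b -> prod_lt (mvec w j b.-1) (mvec w i a.-1)) /\
  (a < cnt w i -> b < cnt w j -> prod_lt (mvec w j b.+1) (mvec w i a.+1)).
Proof.
move=> lt_ij _ _ /andP [a_gt0 _] /andP [b_gt0 _] /andP [le_ba _].
have [lt_w le_ij le_after] := mvec_le_elim lt_ij b_gt0 le_ba.
split=> [a_ge2 _ | _ _].
- (* lowering both parameters: truncated subtraction is monotone *)
  apply: mvec_lt_intro => //; first by lia.
  split=> // [|k lt_jk lt_wjk]; first by lia.
  by have := le_after k lt_jk lt_wjk; lia.
- (* raising both parameters: c_{i,k} <= c_{i,j} + c_{j,k} *)
  apply: mvec_lt_intro => //; split=> // [|k lt_jk lt_wjk]; first by lia.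
  by move: le_ij (cnt2_subadditive lt_ij lt_jk lt_w) b_gt0; clear; lia.
Qed.
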